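(* Let $X_1,\dots,X_n\subseteq\mathbb R^m$ ($2\le n\le m$) be smooth tropical hypersurfaces whose intersection is transversal. For nonempty $J\subseteq[n]=\{1,\dots,n\}$ let $U_J=\bigcup_{i\in J}X_i$, let $I=\bigcap_{i=1}^nX_i$ and $U=U_{[n]}$, and write $Z^{(0)}$ for the set of vertices ($0$-cells) of a polyhedral complex $Z$. Then, as disjoint unions (multisets), $$I^{(0)}\;\sqcup\bigsqcup_{|J|=n-1}U_J^{(0)}\;\sqcup\bigsqcup_{|J|=n-3}U_J^{(0)}\;\sqcup\cdots\;=\;U^{(0)}\;\sqcup\bigsqcup_{|J|=n-2}U_J^{(0)}\;\sqcup\bigsqcup_{|J|=n-4}U_J^{(0)}\;\sqcup\cdots,$$ where the unions range over subsets $J\subseteq[n]$ with $|J|\ge1$ of the indicated sizes. That is, for every point $p\in\mathbb R^m$, $$[p\in I^{(0)}]+\#\{J: 1\le|J|\le n-1,\ |J|\equiv n-1 \ (\mathrm{mod}\ 2),\ p\in U_J^{(0)}\}=[p\in U^{(0)}]+\#\{J:1\le|J|\le n-2,\ |J|\equiv n\ (\mathrm{mod}\ 2),\ p\in U_J^{(0)}\}.$$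
   Context: Over $(\mathbb R,\max,+)$, a tropical polynomial is $f(x)=\max_{a\in\mathcal A}\{\lambda_a+a\cdot x\}$, $\mathcal A\subseteq\mathbb Z^{m}$ finite, $\lambda_a\in\mathbb R$; Newton polytope $\Delta_f=\operatorname{conv}(\mathcal A)$; lifted polytope $\tilde\Delta_f=\operatorname{conv}\{(a,t):a\in\mathcal A,t\le\lambda_a\}$, whose bounded faces project to a regular lattice subdivision $\operatorname{Subdiv}(f)$ of $\Delta_f$. $V_{tr}(f)$ is the non-linear locus of $f$, a polyhedral complex of pure dimension $m-1$, with a bijection $C\mapsto C^\vee$ from $k$-cells of $V_{tr}(f)$ to $(m-k)$-cells of $\operatorname{Subdiv}(f)$, $C^\vee=\operatorname{conv}\{a:\lambda_a+a\cdot x=f(x)\}$ for $x$ in the relative interior of $C$. $V_{tr}(f)$ is smooth if every maximal cell of $\operatorname{Subdiv}(f)$ is a lattice simplex of volume $1/m!$. For $X_i=V_{tr}(f_i)$, the union $U_J=\bigcup_{i\in J}X_i$ is the tropical hypersurface $V_{tr}(\bigodot_{i\in J}f_i)$ (the product polynomial has function $\sum_{i\in J}f_i$), with its polyhedral complex structure and subdivision $\operatorname{Subdiv}_{U_J}=\operatorname{Subdiv}(\bigodot_{i\in J}f_i)$; each cell of it has a privileged representation as a Minkowski sum $\sum_{i\in J}\Lambda_i$, $\Lambda_i\in\operatorname{Subdiv}(f_i)$, obtained by uniquely decomposing the corresponding bounded face of $\tilde\Delta_{\bigodot f_i}=\sum\tilde\Delta_{f_i}$. Each cell $C$ of $I_J=\bigcap_{i\in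 J}X_i$ is uniquely $\bigcap_{i\in J}C_i$ with $C_i$ a cell of $X_i$ containing $C$ in its relative interior, and its dual $C^\vee\in\operatorname{Subdiv}_{U_J}$ has privileged representation $\sum_{i\in J}C_i^\vee$. The intersection $X_1\cap\dots\cap X_n$ is transversal if for every $J\subseteq[n]$ with $|J|\ge2$, $I_J$ has dimension $m-|J|$ and every cell $C$ of $I_J$ satisfies $\dim C^\vee=\sum_{i\in J}\dim C_i^\vee$. *)

From HB Require Import structures.
From mathcomp Require Import all_boot all_order all_algebra.
From mathcomp Require Import reals.
Set Implicit Arguments. Unset Strict Implicit. Unset Printing Implicit Defensive.
Import Order.TTheory GRing.Theory Num.Theory.
Local Open Scope ring_scope.

Section Tropical.
Variables (R : realType) (m : nat).

Definition expo := 'rV[int]_m.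

(* Repeated exponents are harmless:
   only the largest coefficient of a repeated exponent can ever be active. *)
Definition tpoly := seq (expo * R).

Definition tdot (a : expo) (x : 'rV[R]_m) : R :=
  \sum_(j < m) (a 0 j)%:~R * x 0 j.

Definition tterm (p : expo * R) (x : 'rV[R]_m) : R := p.2 + tdot p.1 x.

Definition teval (f : tpoly) (x : 'rV[R]_m) : R :=
  match f with
  | [::] => 0
  | p :: f' => foldr (fun q acc => Num.max (tterm q x) acc) (tterm p x) f'
  end.

(* exponents a with lam_a + a.x = f(x); C^vee = conv (tactive f x) *)
Definition tactive (f : tpoly) (x : 'rV[R]_m) : seq expo :=
  undup [seq p.1 | p <- f & tterm p x == teval f x].

Definition in_Vtr (f : tpoly) (x : 'rV[R]_m) : bool := (1 < size (tactive f x))%N.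

Definition adim (s : seq expo) : nat :=
  \rank (\matrix_(i < size s, j < m)
           ((nth 0 s i 0 j - head 0 s 0 j)%:~R : rat)).

Definition tmul (f g : tpoly) : tpoly :=
  [seq (p.1 + q.1, p.2 + q.2) | p <- f, q <- g].
Definition tprod (fs : seq tpoly) : tpoly := foldr tmul [:: (0, 0)] fs.

(* x is a vertex (0-cell) of V_tr(f): the dual cell conv(tactive f x) of
   the cell containing x in its relative interior has dimension m *)
Definition is_vertex (f : tpoly) (x : 'rV[R]_m) : bool :=
  in_Vtr f x && (adim (tactive f x) == m)%N.

(* Maximal cells of Subdiv(f): the cells are conv(tactive f x), x in R^m *)
Definition max_cell (f : tpoly) (x : 'rV[R]_m) : Prop :=
  forall y, {subset tactive f x <= tactive f y} ->
            {subset tactive f y <= tactive f x}.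

Definition unimodular_simplex (s : seq expo) : Prop :=
  exists (a0 : expo) (b : 'I_m -> expo),
    (forall a, (a \in s) = (a == a0) || [exists i, a == b i]) /\
    `|\det (\matrix_(i < m, j < m) (b i 0 j - a0 0 j))| = 1.

Definition smooth_trop (f : tpoly) : Prop :=
  forall x, max_cell f x -> unimodular_simplex (tactive f x).

Section Family.
Variables (n : nat) (f : 'I_n -> tpoly).

Definition prodJ (J : {set 'I_n}) : tpoly := tprod [seq f i | i <- enum J].

Definition in_IJ (J : {set 'I_n}) (x : 'rV[R]_m) : bool :=
  [forall i in J, in_Vtr (f i) x].

(* dim of C^vee for the cell C of I_J containing x in its relative
   interior (C^vee = sum_i C_i^vee in Subdiv_{U_J}) *)
Definition dual_dim (J : {set 'I_n}) (x : 'rV[R]_m) : nat :=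
  adim (tactive (prodJ J) x).

Definition trop_transversal : Prop :=
  forall J : {set 'I_n}, (2 <= #|J|)%N ->
    (* dim I_J = m - |J|  (cells of I_J have dimension m - dim C^vee) *)
    ((exists x, in_IJ J x /\ (m - dual_dim J x = m - #|J|)%N) /\
     (forall x, in_IJ J x -> (m - dual_dim J x <= m - #|J|)%N)) /\
    (forall x, in_IJ J x ->
       dual_dim J x = (\sum_(i in J) adim (tactive (f i) x))%N).

Definition vert_U (J : {set 'I_n}) (x : 'rV[R]_m) : bool :=
  is_vertex (prodJ J) x.

Definition vert_I (x : 'rV[R]_m) : bool :=
  in_IJ setT x && (dual_dim setT x == m)%N.

End Family.
End Tropical.

From HB Require Import structures.
From mathcomp Require Import all_boot all_order all_algebra.
From mathcomp Require Import reals zify.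
Import Order.TTheory GRing.Theory Num.Theory.
Local Open Scope ring_scope.
Set Implicit Arguments. Unset Strict Implicit.

(* Fix p and let V_i be the direction space of the dual cell of p in
   Subdiv(f_i); it is nonzero exactly when p lies on X_i, i.e. for i in a set S.
   The dual cell of p in U_J is the Minkowski sum of these cells, so its
   dimension is the rank of the sum of the V_i, i in J, and transversality
   makes this rank additive in J.  Hence p is a vertex of U_J iff J contains S
   and the V_i have total dimension m, and a vertex of I iff moreover S = [n].
   Both sides of the identity then count the supersets of S of one parity, and
   toggling an index outside S exchanges the two parities. *)

Section TropicalArithmetic.
Variables (R : realType) (m : nat).
Implicit Types (f g : tpoly R m) (x : 'rV[R]_m).

Lemma foldr_max_tterm x (v : R) (l : tpoly R m) :
  let M := foldr (fun q acc => Num.max (tterm q x) acc) v l in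
  [/\ v <= M, (forall q, q \in l -> tterm q x <= M) &
      M = v \/ exists2 q, q \in l & M = tterm q x].
Proof.
elim: l => [|q l [IH1 IH2 IH3]] /=; first by split => //; left.
split.
- by rewrite (le_trans IH1) // le_max lexx orbT.
- move=> q'; rewrite inE => /orP [/eqP ->|ql]; first by rewrite le_max lexx.
  by rewrite le_max IH2 ?orbT.
- case: (leP (tterm q x)) => _; last by right; exists q; rewrite ?inE ?eqxx.
  case: IH3 => [->|[q' q'l ->]]; first by left.
  by right; exists q'; rewrite // inE q'l orbT.
Qed.

Lemma tterm_le_teval f x q : q \in f -> tterm q x <= teval f x.
Proof.
case: f => [//|p l] /=; have [le_p le_l _] := foldr_max_tterm x (tterm p x) l.
by rewrite inE => /orP [/eqP ->|/le_l].
Qed.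

Lemma teval_attained f x : f != [::] -> exists2 q, q \in f & tterm q x = teval f x.
Proof.
case: f => [//|p l] _ /=; have [_ _ [->|[q ql ->]]] := foldr_max_tterm x (tterm p x) l.
  by exists p; rewrite ?inE ?eqxx.
by exists q; rewrite // inE ql orbT.
Qed.

Lemma teval_eq f x v : f != [::] -> (forall q, q \in f -> tterm q x <= v) ->
  (exists2 q, q \in f & tterm q x = v) -> teval f x = v.
Proof.
move=> f_neq0 ub [q qf qv]; apply/eqP; rewrite eq_le -{2}qv tterm_le_teval // andbT.
by have [q' q'f <-] := teval_attained x f_neq0; apply: ub.
Qed.

Lemma tdotD (a b : expo m) x : tdot (a + b) x = tdot a x + tdot b x.
Proof. by rewrite /tdot -big_split; apply: eq_bigr => j _; rewrite mxE intrD mulrDl. Qed.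

Lemma ttermD (p q : expo m * R) x :
  tterm (p.1 + q.1, p.2 + q.2) x = tterm p x + tterm q x.
Proof. by rewrite /tterm /= tdotD addrACA. Qed.

Lemma tmul_neq_nil f g : f != [::] -> g != [::] -> tmul f g != [::].
Proof. by case: f => // p f _; case: g. Qed.

Lemma tmulP f g r :
  reflect (exists p q, [/\ p \in f, q \in g & r = (p.1 + q.1, p.2 + q.2)])
          (r \in tmul f g).
Proof.
apply: (iffP allpairsP) => [[[p q] /= [pf qg ->]]|[p [q [pf qg ->]]]].
  by exists p, q.
by exists (p, q).
Qed.

Lemma teval_tmul f g x : f != [::] -> g != [::] ->
  teval (tmul f g) x = teval f x + teval g x.
Proof.
move=> f_neq0 g_neq0; apply: teval_eq; first exact: tmul_neq_nil.
  move=> r /tmulP [p [q [pf qg ->]]]; rewrite ttermD.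
  by apply: lerD; apply: tterm_le_teval.
have [p pf <-] := teval_attained x f_neq0; have [q qg <-] := teval_attained x g_neq0.
by exists (p.1 + q.1, p.2 + q.2); [apply/tmulP; exists p, q | rewrite ttermD].
Qed.

Lemma tactiveP f x a :
  reflect (exists2 p, p \in f & tterm p x = teval f x /\ a = p.1) (a \in tactive f x).
Proof.
rewrite /tactive mem_undup; apply: (iffP mapP) => [[p]|[p pf [h ->]]].
  by rewrite mem_filter => /andP [/eqP h pf] ->; exists p.
by exists p; rewrite // mem_filter h eqxx.
Qed.

Lemma tactive_neq_nil f x : f != [::] -> exists a, a \in tactive f x.
Proof.
by move=> /(teval_attained x) [p pf hp]; exists p.1; apply/tactiveP; exists p.
Qed.

(* A sum of two terms attains the maximum of f + g only if each summand
   attains the maximum of its own polynomial. *)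
Lemma tactive_tmulP f g x a : f != [::] -> g != [::] ->
  reflect (exists b c, [/\ b \in tactive f x, c \in tactive g x & a = b + c])
          (a \in tactive (tmul f g) x).
Proof.
move=> f_neq0 g_neq0; apply: (iffP (tactiveP _ _ _)).
- move=> [r /tmulP [p [q [pf qg ->]]]] []; rewrite ttermD teval_tmul // => h ->.
  have hp : tterm p x = teval f x.
    apply/eqP; rewrite eq_le tterm_le_teval //=.
    by rewrite -(lerD2r (tterm q x)) h lerD2l tterm_le_teval.
  have hq : tterm q x = teval g x by apply: (addrI (tterm p x)); rewrite h hp.
  by exists p.1, q.1; split => //; apply/tactiveP; [exists p | exists q].
- move=> [b [c [/tactiveP [p pf [hp ->]] /tactiveP [q qg [hq ->]] ->]]].
  exists (p.1 + q.1, p.2 + q.2); first by apply/tmulP; exists p, q.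
  by rewrite ttermD teval_tmul // hp hq.
Qed.

End TropicalArithmetic.

Section AffineDimension.
Variable m : nat.
Implicit Types (a b : expo m) (s : seq (expo m)).

Definition expo_rat a : 'rV[rat]_m := \row_j ((a 0 j)%:~R : rat).

(* The row space is the direction space of the affine hull of s. *)
Definition diffmx s : 'M[rat]_(size s, m) :=
  \matrix_(i < size s, j < m) ((nth 0 s i 0 j - head 0 s 0 j)%:~R : rat).

Lemma adimE s : adim s = \rank (diffmx s).
Proof. by []. Qed.

Lemma expo_ratD a b : expo_rat (a + b) = expo_rat a + expo_rat b.
Proof. by apply/rowP => j; rewrite !mxE intrD. Qed.

Lemma expo_rat_inj : injective expo_rat.
Proof. by move=> a b /rowP eq_ab; apply/rowP => j; have := eq_ab j; rewrite !mxE => /intr_inj. Qed.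

Lemma row_diffmx s i : row i (diffmx s) = expo_rat (nth 0 s i) - expo_rat (head 0 s).
Proof. by apply/rowP => j; rewrite !mxE intrB. Qed.

Lemma submxB k n (u v : 'rV[rat]_n) (A : 'M[rat]_(k, n)) :
  (u <= A)%MS -> (v <= A)%MS -> (u - v <= A)%MS.
Proof. by move=> uA vA; rewrite addmx_sub // eqmx_opp. Qed.

Lemma diffmx_sub_diff s a b : a \in s -> b \in s ->
  (expo_rat a - expo_rat b <= diffmx s)%MS.
Proof.
have row_sub c : c \in s -> (expo_rat c - expo_rat (head 0 s) <= diffmx s)%MS.
  move=> cs; have ci : (index c s < size s)%N by rewrite index_mem.
  by rewrite -{1}(nth_index 0 cs) -(row_diffmx (Ordinal ci)) row_sub.
move=> /row_sub + /row_sub; have -> : expo_rat a - expo_rat b =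
  (expo_rat a - expo_rat (head 0 s)) - (expo_rat b - expo_rat (head 0 s)).
  by rewrite opprB addrA subrK.
exact: submxB.
Qed.

Lemma diffmx_sub s a0 k (W : 'M[rat]_(k, m)) : a0 \in s ->
  (forall a, a \in s -> (expo_rat a - expo_rat a0 <= W)%MS) -> (diffmx s <= W)%MS.
Proof.
move=> a0s sub_a0; apply/row_subP => i; rewrite row_diffmx.
have s0 : head 0 s \in s by case: s a0s {sub_a0 i} => //= c l _; rewrite inE eqxx.
have -> : expo_rat (nth 0 s i) - expo_rat (head 0 s) =
  (expo_rat (nth 0 s i) - expo_rat a0) - (expo_rat (head 0 s) - expo_rat a0).
  by rewrite opprB addrA subrK.
by apply: submxB; apply: sub_a0; rewrite ?mem_nth.
Qed.

Lemma diffmx_eq0 s : (size s <= 1)%N -> diffmx s = 0.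
Proof.
move=> s_le1; apply/row_matrixP => i; rewrite row_diffmx row0.
have -> : (i : nat) = 0%N by case: i => -[|k] //= /leq_trans /(_ s_le1).
by case: s {i s_le1} => [|a l] /=; rewrite subrr.
Qed.

Lemma adim_gt0 s : uniq s -> (0 < adim s)%N = (1 < size s)%N.
Proof.
move=> s_uniq; rewrite adimE lt0n mxrank_eq0; case: ltnP => [s_gt1|/diffmx_eq0 ->].
  apply/eqP => /(congr1 (row (Ordinal s_gt1))); rewrite row_diffmx row0 => /eqP.
  rewrite subr_eq0 => /eqP /expo_rat_inj.
  by case: s s_uniq s_gt1 => [|a [|b l]] //= /andP [+ _] _ ab; rewrite ab inE eqxx.
by rewrite eqxx.
Qed.

End AffineDimension.

Section DualCellsOfProducts.
Variables (R : realType) (m : nat).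
Implicit Types (f g : tpoly R m) (x : 'rV[R]_m).

(* The dual cell of a tropical product is the Minkowski sum of the dual cells,
   so its direction space is the sum of theirs. *)
Lemma diffmx_tactive_tmul f g x : f != [::] -> g != [::] ->
  (diffmx (tactive (tmul f g) x) :=: diffmx (tactive f x) + diffmx (tactive g x))%MS.
Proof.
move=> f_neq0 g_neq0; have actP := tactive_tmulP _ _ f_neq0 g_neq0.
have [a0 fa0] := tactive_neq_nil x f_neq0; have [b0 gb0] := tactive_neq_nil x g_neq0.
have ab0 : a0 + b0 \in tactive (tmul f g) x by apply/actP; exists a0, b0.
have diffD a b : expo_rat (a + b) - expo_rat (a0 + b0) =
                 (expo_rat a - expo_rat a0) + (expo_rat b - expo_rat b0).
  by rewrite !expo_ratD opprD addrACA.
apply/eqmxP/andP; split.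
  apply: (diffmx_sub ab0) => _ /actP [a [b [fa gb ->]]].
  by rewrite diffD addmx_sub_adds // diffmx_sub_diff.
rewrite addsmx_sub; apply/andP; split.
  apply: (diffmx_sub fa0) => a fa.
  have -> : expo_rat a - expo_rat a0 = expo_rat (a + b0) - expo_rat (a0 + b0).
    by rewrite diffD subrr addr0.
  by rewrite diffmx_sub_diff //; apply/actP; exists a, b0.
apply: (diffmx_sub gb0) => b gb.
have -> : expo_rat b - expo_rat b0 = expo_rat (a0 + b) - expo_rat (a0 + b0).
  by rewrite diffD subrr add0r.
by rewrite diffmx_sub_diff //; apply/actP; exists a0, b.
Qed.

Lemma diffmx_tactive_tprod (fs : seq (tpoly R m)) x : all (fun g => g != [::]) fs ->
  (diffmx (tactive (tprod fs) x) :=: \sum_(g <- fs) <<diffmx (tactive g x)>>)%MS.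
Proof.
elim: fs => [_|g fs IH /andP [g_neq0 fs_neq0]].
  rewrite big_nil /= diffmx_eq0; first by apply/eqmxP; rewrite !sub0mx.
  by rewrite /tactive /=; case: ifP.
have tprod_neq0 : tprod fs != [::].
  by elim: fs fs_neq0 {IH} => //= h hs IHs /andP [/tmul_neq_nil + /IHs]; apply.
rewrite big_cons; apply: eqmx_trans (diffmx_tactive_tmul _ g_neq0 tprod_neq0) _.
exact: adds_eqmx (eqmx_sym (genmxE _)) (IH fs_neq0).
Qed.

Lemma diffmx_tactive_prodJ n (f : 'I_n -> tpoly R m) (J : {set 'I_n}) x :
  (forall i, f i != [::]) ->
  (diffmx (tactive (prodJ f J) x) :=: \sum_(i in J) <<diffmx (tactive (f i) x)>>)%MS.
Proof.
move=> f_neq0; have fs_neq0 : all (fun g => g != [::]) [seq f i | i <- enum J].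
  by apply/allP => _ /mapP [i _ ->].
by apply: eqmx_trans (diffmx_tactive_tprod x fs_neq0) _; rewrite big_map big_enum.
Qed.

End DualCellsOfProducts.

Lemma big_setI_support (I : finType) (T : Type) (idx : T) (op : Monoid.com_law idx)
    (F : I -> T) (K S : {set I}) :
  (forall i, i \notin S -> F i = idx) ->
  \big[op/idx]_(i in K) F i = \big[op/idx]_(i in K :&: S) F i.
Proof.
move=> F_idx; rewrite (big_setID S) /= [X in op _ X]big1 ?Monoid.mulm1 // => i.
by rewrite inE => /andP [/F_idx].
Qed.

Section RankAdditiveFamily.
Variables (F : fieldType) (m n : nat) (V : 'I_n -> 'M[F]_m).
Hypothesis rank_sumsmx : forall K : {set 'I_n},
  \rank (\sum_(i in K) V i)%MS = (\sum_(i in K) \rank (V i))%N.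

Lemma rank_sumsmx_full (J : {set 'I_n}) :
  (\rank (\sum_(i in J) V i)%MS == m) =
  ([set i | V i != 0] \subset J) && (\rank (\sum_(i in [set: 'I_n]) V i)%MS == m).
Proof.
have := rank_leq_col (\sum_(i in [set: 'I_n]) V i)%MS.
rewrite !rank_sumsmx (big_setID J) /= setTI setTD.
have -> : ([set i | V i != 0] \subset J) = (\sum_(i in ~: J) \rank (V i) == 0)%N.
  rewrite sum_nat_eq0; apply/subsetP/forall_inP => [supp i|zero i].
    by rewrite inE mxrank_eq0 => iJ; apply: contraNT iJ => Vi; rewrite supp ?inE.
  by rewrite inE => Vi; apply: contraR Vi => iJ; rewrite -mxrank_eq0 zero ?inE.
move: (\sum_(i in J) _)%N (\sum_(i in ~: J) _)%N => a b le_m; apply/idP/idP; lia.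
Qed.

End RankAdditiveFamily.

Section ParityOfSupersets.
Variable T : finType.
Implicit Types S J : {set T}.

(* Toggling a fixed element outside S is a parity-reversing involution on the
   supersets of S. *)
Lemma card_supersets_oddb S (b : bool) : S != setT ->
  #|[set J : {set T} | (S \subset J) && (odd #|J| != b)]| =
  #|[set J : {set T} | (S \subset J) && (odd #|J| == b)]|.
Proof.
move=> S_neqT; have [x _ xS] : exists2 x, x \in setT & x \notin S.
  by apply/subsetPn; rewrite subTset.
pose t J := if x \in J then J :\ x else x |: J.
have tK : involutive t.
  by move=> J; rewrite /t; case: (boolP (x \in J)) => xJ; rewrite !inE eqxx /= ?setD1K ?setU1K.
have subt J : (S \subset t J) = (S \subset J).
  have subD1 J' : (S \subset J') = (S \subset J' :\ x) by rewrite subsetD1 xS andbT.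
  have tD1 : t J :\ x = J :\ x.
    by apply/setP => y; rewrite /t; case: ifP => _; rewrite !inE; case: (y =P x).
  by rewrite subD1 tD1 -subD1.
have oddt J : odd #|t J| = ~~ odd #|J|.
  rewrite /t; case: ifP => xJ; last by rewrite cardsU1 xJ.
  by rewrite [in RHS](cardsD1 x J) xJ /= negbK.
set O := [set J | _ && (_ != b)].
rewrite -(card_imset (mem O) (can_inj tK)) (can2_imset_pre (mem O) tK tK).
apply: eq_card => J; rewrite !inE subt oddt; clear O.
by case: (odd _); case: b.
Qed.

End ParityOfSupersets.

Lemma card_supersets_parity n (S : {set 'I_n}) : S != set0 ->
  ((S == setT) +
   #|[set J : {set 'I_n} | [&& 1 <= #|J| <= n.-1, odd #|J| == odd n.-1 & S \subset J]]| =
   1 + #|[set J : {set 'I_n} | [&& 1 <= #|J| <= n.-2, odd #|J| == odd n & S \subset J]]|)%N.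
Proof.
move=> S_neq0.
have J_gt0 (J : {set 'I_n}) : S \subset J -> (0 < #|J|)%N.
  by move=> /subset_leq_card; apply: leq_trans; rewrite card_gt0.
have J_le (J : {set 'I_n}) : (#|J| <= n)%N by rewrite -[n in (_ <= n)%N]card_ord max_card.
have eqT (J : {set 'I_n}) : (J == setT) = (#|J| == n).
  have := J_le J; rewrite eqEcard subsetT cardsT card_ord /= => ?; apply/idP/idP; lia.
have -> : [set J : {set 'I_n} | [&& 1 <= #|J| <= n.-1, odd #|J| == odd n.-1 & S \subset J]]%N
          = [set J : {set 'I_n} | (S \subset J) && (odd #|J| != odd n)].
  apply/setP => J; rewrite !inE; case: (boolP (S \subset J)) => SJ; rewrite ?andbT ?andbF //.
  move: (J_le J) (J_gt0 J SJ); set c := #|J|; clearbody c => c_le c_gt0.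
  by apply/idP/idP; lia.
set B := [set J : {set 'I_n} | [&& _, _ & _]].
have -> : (1 + #|B|)%N = #|setT |: B|.
  have n_gt0 : (0 < n)%N by move: (J_le S) (J_gt0 S (subxx S)); lia.
  by rewrite cardsU1 inE cardsT card_ord (_ : (n <= n.-2)%N = false) ?andbF //; lia.
have -> : setT |: B = [set J : {set 'I_n} | (S \subset J) && (odd #|J| == odd n)].
  apply/setP => J; rewrite !inE; case: (boolP (S \subset J)) => SJ; rewrite ?andbT ?andbF ?orbF.
    rewrite eqT; move: (J_le J) (J_gt0 J SJ); set c := #|J|; clearbody c => c_le c_gt0.
    by apply/idP/idP; lia.
  by apply: contraNF SJ => /eqP ->; exact: subsetT.
have [->|S_neqT] := eqVneq S setT; last by rewrite card_supersets_oddb.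
rewrite add1n; set O := [set J | _ && (_ != _)]; set E := [set J | _ && (_ == _)].
have -> : O = set0 by apply/setP => J; rewrite !inE subTset eqT; case: eqP => [->|]; rewrite ?eqxx.
have -> : E = [set setT].
  by apply/setP => J; rewrite !inE subTset eqT; case: eqP => [->|]; rewrite ?eqxx.
by rewrite cards0 cards1.
Qed.

Section VerticesAtAPoint.
Variables (R : realType) (m n : nat) (f : 'I_n -> tpoly R m) (p : 'rV[R]_m).
Hypotheses (m_gt0 : (0 < m)%N) (f_neq0 : forall i, f i != [::])
  (htr : trop_transversal f).

Let V i := <<diffmx (tactive (f i) p)>>%MS.
Let r (J : {set 'I_n}) := \rank (\sum_(i in J) V i)%MS.
Let S := [set i | V i != 0].

Lemma adim_tactive_prodJ J : adim (tactive (prodJ f J) p) = r J.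
Proof. by rewrite adimE; apply/eqmx_rank/eqmxP/diffmx_tactive_prodJ. Qed.

Lemma in_Vtr_dual i : in_Vtr (f i) p = (i \in S).
Proof. by rewrite inE /in_Vtr -adim_gt0 ?undup_uniq // lt0n -mxrank_eq0 mxrank_gen. Qed.

Lemma dual_eq0 i : i \notin S -> V i = 0.
Proof. by rewrite inE negbK => /eqP. Qed.

Lemma dual_support_neq0 : r setT == m -> S != set0.
Proof.
apply: contraTneq => S0; rewrite /r big1 ?mxrank0 1?eq_sym -?lt0n // => i _.
by apply: dual_eq0; rewrite S0 inE.
Qed.

Lemma rank_sumsmx_dual K : r K = (\sum_(i in K) \rank (V i))%N.
Proof.
have rankV0 i : i \notin S -> \rank (V i) = 0%N by move/dual_eq0 ->; rewrite mxrank0.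
have -> : r K = r (K :&: S) by rewrite /r (big_setI_support _ _ dual_eq0).
rewrite (big_setI_support _ _ rankV0).
have [K2|] := leqP 2 #|K :&: S|.
  have [_ add_dim] := htr K2; rewrite -adim_tactive_prodJ -/(dual_dim f _ p) add_dim.
    by apply: eq_bigr => i _; rewrite mxrank_gen.
  by apply/forall_inP => i; rewrite in_Vtr_dual; case/setIP.
rewrite ltnS leq_eqVlt ltnS leqn0 => /orP [/cards1P [j ->]|/eqP /cards0_eq ->].
  by rewrite /r !big_set1.
by rewrite /r !big_set0 mxrank0.
Qed.

Lemma vert_U_dual J : vert_U f J p = (S \subset J) && (r setT == m).
Proof.
rewrite -(rank_sumsmx_full rank_sumsmx_dual) /vert_U /is_vertex /in_Vtr.
rewrite -adim_gt0 ?undup_uniq // adim_tactive_prodJ.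
by rewrite /r; case: eqP => [->|_]; rewrite ?andbF ?andbT.
Qed.

Lemma vert_I_dual : vert_I f p = (S == setT) && (r setT == m).
Proof.
rewrite /vert_I /dual_dim adim_tactive_prodJ; congr (_ && _).
apply/forall_inP/eqP => [inS|S_T i _]; last by rewrite in_Vtr_dual S_T inE.
by apply/setP => i; move: (inS i (in_setT i)); rewrite in_Vtr_dual !inE.
Qed.

Lemma vert_count_identity :
  (vert_I f p +
   #|[set J : {set 'I_n} | [&& 1 <= #|J| <= n.-1, odd #|J| == odd n.-1 & vert_U f J p]]|)%N =
  (vert_U f setT p +
   #|[set J : {set 'I_n} | [&& 1 <= #|J| <= n.-2, odd #|J| == odd n & vert_U f J p]]|)%N.
Proof.
rewrite vert_I_dual vert_U_dual subsetT.
under eq_finset => J do rewrite vert_U_dual.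
under [in RHS]eq_finset => J do rewrite vert_U_dual.
case full: (r setT == m); last first.
  rewrite !andbF; under eq_finset => J do rewrite !andbF.
  by under [in RHS]eq_finset => J do rewrite !andbF; rewrite !cards0.
rewrite !andbT; under eq_finset => J do rewrite andbT.
under [in RHS]eq_finset => J do rewrite andbT.
by apply: card_supersets_parity; apply: dual_support_neq0; rewrite full.
Qed.

End VerticesAtAPoint.

Unset Implicit Arguments.

Theorem lemma3p4 (R : realType) (m n : nat) (f : 'I_n -> tpoly R m)
  (hn : (2 <= n)%N) (hnm : (n <= m)%N)
  (hne : forall i, f i != [::])
  (hsmooth : forall i, smooth_trop (f i))
  (htr : trop_transversal f) :
  forall p : 'rV[R]_m,
    (vert_I f p +
     #|[set J : {set 'I_n} | [&& 1 <= #|J| <= n.-1, odd #|J| == odd n.-1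
                              & vert_U f J p]]|)%N =
    (vert_U f setT p +
     #|[set J : {set 'I_n} | [&& 1 <= #|J| <= n.-2, odd #|J| == odd n
                              & vert_U f J p]]|)%N.
Proof.
move=> p; apply: vert_count_identity => //.
by apply: leq_trans hnm; apply: leq_trans hn.
Qed.
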